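(* Let $\lambda_1,\lambda_2$ be as in the context and $K\in(-1,1)$. Consider the initial value problem $$b'(v)=\sqrt{\lambda_1^2-K\left(\lambda_1^2\cos^2 b(v)+\lambda_2^2\sin^2 b(v)\right)},\qquad b(0)=0.$$ Its solution $b$ is well-defined on all of $\mathbb{R}$ and satisfies: (1) $b$ is an increasing diffeomorphism from $\mathbb{R}$ to $\mathbb{R}$; (2) $b$ is odd; (3) there exists a real number $W>0$ such that $b(v+W)=b(v)+\pi$ for all $v\in\mathbb{R}$; (4) $b(kW)=k\pi$ for all $k\in\mathbb{Z}$; (5) $b(kW/2)=k\pi/2$ for all odd integers $k$.
   Context: Either $\lambda_1>\lambda_2>0$ or $\lambda_1=\lambda_2=1$. *)

From Stdlib Require Import Reals ZArith.
From Coquelicot Require Import Coquelicot.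
Open Scope R_scope.

Definition admissible_lambdas (l1 l2 : R) : Prop :=
  (l1 > l2 /\ l2 > 0) \/ (l1 = 1 /\ l2 = 1).

Definition ode_rhs (l1 l2 K x : R) : R :=
  sqrt (l1 ^ 2 - K * (l1 ^ 2 * (cos x) ^ 2 + l2 ^ 2 * (sin x) ^ 2)).

Definition solves_ivp (l1 l2 K : R) (b : R -> R) : Prop :=
  b 0 = 0 /\ forall v : R, is_derive b v (ode_rhs l1 l2 K (b v)).

Definition increasing_diffeo (b : R -> R) : Prop :=
  (forall x y : R, x < y -> b x < b y) /\
  (forall x : R, ex_derive b x /\ continuous (Derive b) x) /\
  exists g : R -> R,
    (forall x : R, g (b x) = x) /\ (forall y : R, b (g y) = y) /\
    (forall y : R, ex_derive g y /\ continuous (Derive g) y).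

From Stdlib Require Import Reals ZArith Lra Psatz Ranalysis5.
From Coquelicot Require Import Coquelicot.
Open Scope R_scope.

(* A positive continuous bounded [f] makes the travel time
   [T x = \int_0^x dt / f t] an increasing bijection of R with derivative
   [1 / f], and every solution of [b' = f b], [b 0 = 0] satisfies
   [T (b v) = v]; so the solution exists, is unique and equals [T^-1].
   The right-hand side of the ODE is even and [PI]-periodic, hence [T] is odd,
   [T (x + PI) = T x + T PI] and [T (PI - x) = T PI - T x]; inverting these with
   [W = T PI] gives oddness of [b], [b (v + W) = b v + PI] and [b (W / 2) = PI / 2]. *)

Lemma is_derive_continuity_pt (F : R -> R) x l :
  is_derive F x l -> continuity_pt F x.
Proof.
  intros HF; apply continuity_pt_filterlim, (ex_derive_continuous F).
  now exists l.
Qed.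

Lemma is_derive_0_const (F : R -> R) :
  (forall x, is_derive F x 0) -> forall x y, F x = F y.
Proof.
  intros HF x y.
  destruct (MVT_gen F x y (fun _ => 0)) as [c [_ Hc]].
  - intros t _; apply HF.
  - intros t _; exact (is_derive_continuity_pt F t 0 (HF t)).
  - lra.
Qed.

Lemma shift_IZR (F : R -> R) p q :
  (forall x, F (x + p) = F x + q) ->
  forall (k : Z) x, F (x + IZR k * p) = F x + IZR k * q.
Proof.
  intros Hshift k x.
  induction k as [| k IHk | k IHk] using Z.peano_ind.
  - rewrite !Rmult_0_l, !Rplus_0_r; reflexivity.
  - rewrite succ_IZR.
    replace (x + (IZR k + 1) * p) with (x + IZR k * p + p) by ring.
    rewrite Hshift, IHk; ring.
  - rewrite <- Z.sub_1_r, minus_IZR.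
    specialize (Hshift (x + (IZR k - 1) * p)).
    replace (x + (IZR k - 1) * p + p) with (x + IZR k * p) in Hshift by ring.
    rewrite IHk in Hshift; lra.
Qed.

Section StrictlyIncreasing.

Variables F G dF : R -> R.
Hypothesis F_derive : forall x, is_derive F x (dF x).
Hypothesis F_increasing : forall x y, x < y -> F x < F y.
Hypothesis F_G_id : forall y, F (G y) = y.

Lemma le_of_increasing_le x y : F x <= F y -> x <= y.
Proof.
  intros H; destruct (Rle_or_lt x y) as [|Hyx]; [assumption|].
  specialize (F_increasing _ _ Hyx); lra.
Qed.

Lemma inverse_le x y : x <= y -> G x <= G y.
Proof. intros H; apply le_of_increasing_le; rewrite !F_G_id; exact H. Qed.

Lemma is_derive_inverse y :
  dF (G y) <> 0 -> is_derive G y (/ dF (G y)).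
Proof.
  intros Hne.
  (* With this witness [derive_pt F a (Prf a _)] computes to [dF a]. *)
  set (Prf := fun a (_ : G (y - 1) <= a <= G (y + 1)) =>
    exist (fun l => derivable_pt_lim F a l) (dF a)
      (proj1 (is_derive_Reals _ _ _) (F_derive a)) : derivable_pt F a).
  assert (G_range : G (y - 1) <= G y <= G (y + 1))
    by (split; apply inverse_le; lra).
  assert (G_cont : continuity_pt G y).
  { apply (continuity_pt_recip_interv F G (G y - 1) (G y + 1)).
    - lra.
    - intros; apply F_increasing; lra.
    - intros; apply F_G_id.
    - intros x H1 H2; split; apply le_of_increasing_le; rewrite F_G_id; lra.
    - intros a _; exact (is_derive_continuity_pt F a _ (F_derive a)).
    - rewrite <- (F_G_id y) at 2 3; split; apply F_increasing; lra. }
  assert (Hder := derivable_pt_lim_recip_interv F G (y - 1) (y + 1) y Prf G_cont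
    ltac:(lra) ltac:(lra) G_range ltac:(intros; apply F_G_id) Hne).
  apply is_derive_Reals.
  replace (/ dF (G y)) with (1 / dF (G y)) by (unfold Rdiv; ring).
  exact Hder.
Qed.

End StrictlyIncreasing.

Section TravelTime.

Variable f : R -> R.
Hypothesis f_pos : forall x, 0 < f x.
Hypothesis f_cont : forall x, continuous f x.
Variable M : R.
Hypothesis f_le_M : forall x, f x <= M.

Definition travel_time x := RInt (fun t => / f t) 0 x.

Lemma inv_f_continuous x : continuous (fun t => / f t) x.
Proof. apply continuous_Rinv_comp; [apply f_cont | apply Rgt_not_eq, f_pos]. Qed.

Lemma travel_time_derive x : is_derive travel_time x (/ f x).
Proof.
  apply (is_derive_RInt (fun t => / f t) travel_time 0 x); [|apply inv_f_continuous].
  apply filter_forall; intros y.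
  apply (RInt_correct (V := R_CompleteNormedModule)),
        (ex_RInt_continuous (V := R_CompleteNormedModule)).
  intros; apply inv_f_continuous.
Qed.

Lemma travel_time_0 : travel_time 0 = 0.
Proof. exact (RInt_point 0 (fun t => / f t)). Qed.

Lemma travel_time_lower_bound x y : x <= y -> (y - x) / M <= travel_time y - travel_time x.
Proof.
  intros Hxy.
  destruct (MVT_gen travel_time x y (fun t => / f t)) as [c [_ ->]].
  - intros t _; apply travel_time_derive.
  - intros t _; exact (is_derive_continuity_pt _ t _ (travel_time_derive t)).
  - rewrite Rmult_comm; apply Rmult_le_compat_l; [lra|].
    apply Rinv_le_contravar; [apply f_pos | apply f_le_M].
Qed.

Lemma M_pos : 0 < M.
Proof. apply Rlt_le_trans with (f 0); [apply f_pos | apply f_le_M]. Qed.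

Lemma travel_time_increasing x y : x < y -> travel_time x < travel_time y.
Proof.
  intros Hxy.
  assert (0 < (y - x) / M) by (apply Rdiv_lt_0_compat; [lra | apply M_pos]).
  generalize (travel_time_lower_bound x y (Rlt_le _ _ Hxy)); lra.
Qed.

Lemma travel_time_inj x y : travel_time x = travel_time y -> x = y.
Proof.
  intros H; apply Rle_antisym;
    apply (le_of_increasing_le travel_time travel_time_increasing); lra.
Qed.

(* Slope at least [1/M] gives [T (- M |y|) <= y <= T (M |y|)]; conclude by the IVT. *)
Lemma travel_time_surj y : {x | travel_time x = y}.
Proof.
  set (r := M * Rabs y).
  assert (r_nonneg : 0 <= r) by (apply Rmult_le_pos; [apply Rlt_le, M_pos | apply Rabs_pos]).
  assert (Hlo := travel_time_lower_bound (- r) 0 ltac:(lra)).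
  assert (Hhi := travel_time_lower_bound 0 r r_nonneg).
  replace ((0 - - r) / M) with (Rabs y) in Hlo by (unfold r; field; apply Rgt_not_eq, M_pos).
  replace ((r - 0) / M) with (Rabs y) in Hhi by (unfold r; field; apply Rgt_not_eq, M_pos).
  rewrite travel_time_0 in Hlo, Hhi.
  destruct (IVT_gen travel_time (- r) r y) as [x [_ Hx]].
  - intros t; exact (is_derive_continuity_pt _ t _ (travel_time_derive t)).
  - generalize (Rle_abs y) (Rle_abs (- y)); rewrite Rabs_Ropp; intros.
    split; [apply Rle_trans with (travel_time (- r)); [apply Rmin_l | lra]
           | apply Rle_trans with (travel_time r); [lra | apply Rmax_r]].
  - exists x; exact Hx.
Defined.

Definition travel_time_inv y := proj1_sig (travel_time_surj y).

Lemma travel_time_invK y : travel_time (travel_time_inv y) = y.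
Proof. exact (proj2_sig (travel_time_surj y)). Qed.

Lemma travel_time_inv_derive y : is_derive travel_time_inv y (f (travel_time_inv y)).
Proof.
  rewrite <- (Rinv_inv (f (travel_time_inv y))).
  apply (is_derive_inverse travel_time travel_time_inv (fun t => / f t)).
  - exact travel_time_derive.
  - exact travel_time_increasing.
  - exact travel_time_invK.
  - apply Rinv_neq_0_compat, Rgt_not_eq, f_pos.
Qed.

Lemma travel_time_affine a c :
  (forall x, f (a * x + c) = f x) ->
  forall x, travel_time (a * x + c) = travel_time c + a * travel_time x.
Proof.
  intros Hf x.
  enough (H : travel_time (a * x + c) - a * travel_time x
            = travel_time (a * 0 + c) - a * travel_time 0)
    by (rewrite travel_time_0, Rmult_0_r, Rplus_0_l in H; lra).
  apply (is_derive_0_const (fun x => travel_time (a * x + c) - a * travel_time x)).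
  intros t.
  evar (l : R); replace 0 with l; subst l.
  - apply (is_derive_minus (fun x => travel_time (a * x + c)) (fun x => a * travel_time x)).
    + apply (is_derive_comp travel_time (fun x => a * x + c)).
      * apply travel_time_derive.
      * auto_derive; auto.
    + apply is_derive_scal, travel_time_derive.
  - rewrite Hf; simpl; unfold minus, plus, opp, scal; simpl; unfold mult; simpl; ring.
Qed.

Lemma travel_time_inv_solution :
  travel_time_inv 0 = 0 /\ forall v, is_derive travel_time_inv v (f (travel_time_inv v)).
Proof.
  split; [|exact travel_time_inv_derive].
  apply travel_time_inj; rewrite travel_time_invK, travel_time_0; reflexivity.
Qed.

Section Solution.

Variable b : R -> R.
Hypothesis b_0 : b 0 = 0.
Hypothesis b_derive : forall v, is_derive b v (f (b v)).

Lemma travel_time_solution v : travel_time (b v) = v.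
Proof.
  enough (H : travel_time (b v) - v = travel_time (b 0) - 0)
    by (rewrite b_0, travel_time_0 in H; lra).
  apply (is_derive_0_const (fun v => travel_time (b v) - v)).
  intros t.
  evar (l : R); replace 0 with l; subst l.
  - apply (is_derive_minus (fun v => travel_time (b v)) (fun v => v)).
    + apply (is_derive_comp travel_time b); [apply travel_time_derive | apply b_derive].
    + apply is_derive_id.
  - simpl; unfold minus, plus, opp, scal, one; simpl; unfold mult; simpl.
    field; apply Rgt_not_eq, f_pos.
Qed.

Lemma solution_travel_time x : b (travel_time x) = x.
Proof. apply travel_time_inj; rewrite travel_time_solution; reflexivity. Qed.

Lemma solution_increasing_diffeo : increasing_diffeo b.
Proof.
  split; [|split].
  - intros x y Hxy.
    rewrite <- (travel_time_solution x), <- (travel_time_solution y) in Hxy.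
    destruct (Rlt_or_le (b x) (b y)) as [|Hyx]; [assumption|].
    destruct Hyx as [Hyx|Hyx]; [apply travel_time_increasing in Hyx | rewrite Hyx in Hxy]; lra.
  - intros x; split; [exists (f (b x)); apply b_derive|].
    apply (continuous_ext (fun x => f (b x))).
    + intros t; symmetry; apply is_derive_unique, b_derive.
    + apply continuous_comp; [apply (ex_derive_continuous b); exists (f (b x)); apply b_derive | apply f_cont].
  - exists travel_time; split; [exact travel_time_solution | split; [exact solution_travel_time|]].
    intros y; split; [exists (/ f y); apply travel_time_derive|].
    apply (continuous_ext (fun t => / f t)); [|apply inv_f_continuous].
    intros t; symmetry; apply is_derive_unique, travel_time_derive.
Qed.

Section Symmetric.

Hypothesis f_even : forall x, f (- x) = f x.
Hypothesis f_periodic : forall x, f (x + PI) = f x.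

Lemma f_reflect x : f (-1 * x + PI) = f x.
Proof. replace (-1 * x + PI) with (- x + PI) by ring; rewrite f_periodic; apply f_even. Qed.

Lemma solution_odd v : b (- v) = - b v.
Proof.
  apply travel_time_inj; rewrite travel_time_solution.
  assert (H := travel_time_affine (-1) 0
    ltac:(intros x; replace (-1 * x + 0) with (- x) by ring; apply f_even) (b v)).
  rewrite travel_time_0, travel_time_solution in H.
  replace (-1 * b v + 0) with (- b v) in H by ring; lra.
Qed.

Lemma solution_shift v : b (v + travel_time PI) = b v + PI.
Proof.
  apply travel_time_inj; rewrite travel_time_solution.
  assert (H := travel_time_affine 1 PI
    ltac:(intros x; rewrite Rmult_1_l; apply f_periodic) (b v)).
  rewrite travel_time_solution, Rmult_1_l in H; lra.
Qed.

Lemma solution_half_period : b (travel_time PI / 2) = PI / 2.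
Proof.
  apply travel_time_inj; rewrite travel_time_solution.
  assert (H := travel_time_affine (-1) PI f_reflect (PI / 2)).
  replace (-1 * (PI / 2) + PI) with (PI / 2) in H by field; lra.
Qed.

Lemma solution_quasi_periodic :
  exists W : R, W > 0 /\
    (forall v : R, b (v + W) = b v + PI) /\
    (forall k : Z, b (IZR k * W) = IZR k * PI) /\
    (forall k : Z, Z.odd k = true -> b (IZR k * W / 2) = IZR k * PI / 2).
Proof.
  exists (travel_time PI); split; [|split; [exact solution_shift | split]].
  - rewrite <- travel_time_0; apply travel_time_increasing, PI_RGT_0.
  - intros k.
    rewrite <- (Rplus_0_l (IZR k * _)), (shift_IZR b _ _ solution_shift), b_0; ring.
  - intros k Hk; apply Z.odd_spec in Hk; destruct Hk as [j ->].
    rewrite plus_IZR, mult_IZR.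
    replace ((2 * IZR j + 1) * travel_time PI / 2)
      with (travel_time PI / 2 + IZR j * travel_time PI) by field.
    rewrite (shift_IZR b _ _ solution_shift), solution_half_period; field.
Qed.

End Symmetric.

End Solution.

End TravelTime.

Lemma admissible_lambdas_sq l1 l2 :
  admissible_lambdas l1 l2 -> 0 < l1 ^ 2 /\ l2 ^ 2 <= l1 ^ 2.
Proof. intros [[H1 H2] | [-> ->]]; split; nra. Qed.

Section OdeRhs.

Variables l1 l2 K : R.

Lemma ode_rhs_even x : ode_rhs l1 l2 K (- x) = ode_rhs l1 l2 K x.
Proof. unfold ode_rhs; rewrite cos_neg, sin_neg; f_equal; ring. Qed.

Lemma ode_rhs_periodic x : ode_rhs l1 l2 K (x + PI) = ode_rhs l1 l2 K x.
Proof. unfold ode_rhs; rewrite neg_cos, neg_sin; f_equal; ring. Qed.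

Hypothesis l1_sq_pos : 0 < l1 ^ 2.
Hypothesis l2_sq_le : l2 ^ 2 <= l1 ^ 2.
Hypothesis K_range : -1 < K < 1.

Lemma anisotropy_bounds x : 0 <= l1 ^ 2 * cos x ^ 2 + l2 ^ 2 * sin x ^ 2 <= l1 ^ 2.
Proof. generalize (sin2_cos2 x); unfold Rsqr; split; nra. Qed.

Lemma ode_radicand_pos x : 0 < l1 ^ 2 - K * (l1 ^ 2 * cos x ^ 2 + l2 ^ 2 * sin x ^ 2).
Proof. generalize (anisotropy_bounds x); destruct (Rle_or_lt 0 K); nra. Qed.

Lemma ode_rhs_pos x : 0 < ode_rhs l1 l2 K x.
Proof. apply sqrt_lt_R0, ode_radicand_pos. Qed.

Lemma ode_rhs_cont x : continuous (ode_rhs l1 l2 K) x.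
Proof.
  apply (ex_derive_continuous (ode_rhs l1 l2 K)).
  generalize (ode_radicand_pos x); unfold ode_rhs; intros; auto_derive; tauto.
Qed.

Lemma ode_rhs_le x : ode_rhs l1 l2 K x <= sqrt (2 * l1 ^ 2).
Proof. apply sqrt_le_1_alt; generalize (anisotropy_bounds x); nra. Qed.

End OdeRhs.

Theorem proposition4p1 (l1 l2 K : R)
  (Hl : admissible_lambdas l1 l2) (HK : -1 < K < 1) :
  (exists b : R -> R, solves_ivp l1 l2 K b) /\
  (forall b : R -> R, solves_ivp l1 l2 K b ->
     increasing_diffeo b /\
     (forall v : R, b (- v) = - b v) /\
     exists W : R, W > 0 /\
       (forall v : R, b (v + W) = b v + PI) /\
       (forall k : Z, b (IZR k * W) = IZR k * PI) /\
       (forall k : Z, Z.odd k = true -> b (IZR k * W / 2) = IZR k * PI / 2)).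
Proof.
  destruct (admissible_lambdas_sq _ _ Hl) as [Hl1 Hl12].
  pose proof (ode_rhs_pos _ _ _ Hl1 Hl12 HK) as f_pos.
  pose proof (ode_rhs_cont _ _ _ Hl1 Hl12 HK) as f_cont.
  pose proof (ode_rhs_le _ _ _ Hl1 Hl12 HK) as f_le_M.
  split.
  { eexists; exact (travel_time_inv_solution _ f_pos f_cont _ f_le_M). }
  intros b [b_0 b_derive]; split; [|split].
  - exact (solution_increasing_diffeo _ f_pos f_cont _ f_le_M b b_0 b_derive).
  - exact (solution_odd _ f_pos f_cont _ f_le_M b b_0 b_derive (ode_rhs_even l1 l2 K)).
  - exact (solution_quasi_periodic _ f_pos f_cont _ f_le_M b b_0 b_derive
             (ode_rhs_even l1 l2 K) (ode_rhs_periodic l1 l2 K)).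
Qed.
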